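(* Let $\mathcal{H}$ be any clustering method (a map assigning to every network $(X,A_X)$ an ultrametric on $X$) satisfying the Axiom of Value (A1) and the Axiom of Transformation (A2). Then for every network $(X,A_X)$, writing $u_X=\mathcal{H}(X,A_X)$, we have for all $x,x'\in X$ $$u^{NR}_X(x,x')\le u_X(x,x')\le u^R_X(x,x'),$$ where $$u^R_X(x,x')=\min_{C(x,x')}\max_{0\le i\le l-1}\max\big(A_X(x_i,x_{i+1}),A_X(x_{i+1},x_i)\big),$$ $$u^{NR}_X(x,x')=\max\Big(\min_{C(x,x')}\max_{0\le i\le l-1}A_X(x_i,x_{i+1}),\ \min_{C(x',x)}\max_{0\le i\le l-1}A_X(x_i,x_{i+1})\Big),$$ with minima taken over all chains $C(a,b)=[a=x_0,x_1,\dots,x_l=b]$ of nodes of $X$ from $a$ to $b$.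
   Context: A network is a pair $(X,A_X)$ with $X$ a finite nonempty set and $A_X:X\times X\to\mathbb{R}$ satisfying $A_X(x,x')\ge 0$ for all $x,x'$, with $A_X(x,x')=0$ iff $x=x'$; $A_X$ need not be symmetric nor satisfy the triangle inequality. An ultrametric on $X$ is a function $u_X:X\times X\to\mathbb{R}$ that is nonnegative, symmetric, satisfies $u_X(x,x')=0$ iff $x=x'$, and satisfies $u_X(x,x')\le\max\big(u_X(x,x''),u_X(x'',x')\big)$ for all $x,x',x''\in X$. Axiom of Value (A1): for every two-node network $X=\{p,q\}$ with $A_X(p,q)=\alpha$, $A_X(q,p)=\beta$ (with $\alpha,\beta>0$), the output ultrametric satisfies $u_X(p,q)=\max(\alpha,\beta)$. Axiom of Transformation (A2): for any two networks $(X,A_X)$, $(Y,A_Y)$ and any map $\phi:X\to Y$ with $A_X(x,x')\ge A_Y(\phi(x),\phi(x'))$ for all $x,x'\in X$, the output ultrametrics $u_X=\mathcal{H}(X,A_X)$ and $u_Y=\mathcal{H}(Y,A_Y)$ satisfy $u_X(x,x')\ge u_Y(\phi(x),\phi(x'))$ for all $x,x'\in X$. *)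

From HB Require Import structures.
From mathcomp Require Import all_boot all_order all_algebra.
From mathcomp Require Import boolp classical_sets reals.
Set Implicit Arguments. Unset Strict Implicit. Unset Printing Implicit Defensive.
Import Order.TTheory GRing.Theory Num.Theory.
Local Open Scope ring_scope.
Local Open Scope classical_set_scope.

Section Defs.
Variable R : realType.

Definition is_network (T : finType) (A : T -> T -> R) : Prop :=
  (0 < #|T|)%N /\ (forall x y, 0 <= A x y) /\ (forall x y, A x y = 0 <-> x = y).

Definition is_ultrametric (T : finType) (u : T -> T -> R) : Prop :=
  [/\ forall x y, 0 <= u x y,
      forall x y, u x y = u y x,
      forall x y, u x y = 0 <-> x = y &
      forall x y z, u x y <= Num.max (u x z) (u z y)].

Definition method := forall T : finType, (T -> T -> R) -> T -> T -> R.

Definition outputs_ultrametrics (H : method) : Prop :=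
  forall (T : finType) (A : T -> T -> R), is_network A -> is_ultrametric (H T A).

Definition axiom_value (H : method) : Prop :=
  forall (T : finType) (A : T -> T -> R), #|T| = 2%N -> is_network A ->
  forall p q : T, p != q -> H T A p q = Num.max (A p q) (A q p).

Definition axiom_transformation (H : method) : Prop :=
  forall (T T' : finType) (A : T -> T -> R) (A' : T' -> T' -> R) (phi : T -> T'),
  is_network A -> is_network A' ->
  (forall x x', A' (phi x) (phi x') <= A x x') ->
  forall x x', H T' A' (phi x) (phi x') <= H T A x x'.

(* A chain C(a,b) = [a = x_0, x_1, ..., x_l = b] is represented by a and the
   sequence s = [x_1; ...; x_l] with last a s = b. *)
Definition chains (T : finType) (a b : T) : set (seq T) := [set s | last a s = b].

(* max_{0 <= i <= l-1} B x_i x_{i+1}  (0 for the trivial chain l = 0). *)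
Definition chain_cost (T : finType) (B : T -> T -> R) (a : T) (s : seq T) : R :=
  \big[Num.max/0]_(v <- pairmap B a s) v.

(* min over all chains from a to b of chain_cost B (attained; written as inf). *)
Definition min_chain_cost (T : finType) (B : T -> T -> R) (a b : T) : R :=
  inf [set chain_cost B a s | s in chains a b].

Definition u_R (T : finType) (A : T -> T -> R) (x x' : T) : R :=
  min_chain_cost (fun y z => Num.max (A y z) (A z y)) x x'.

Definition u_NR (T : finType) (A : T -> T -> R) (x x' : T) : R :=
  Num.max (min_chain_cost A x x') (min_chain_cost A x' x).

End Defs.

(* Upper bound: by (A1) and (A2) applied to the map from the two-node network
   {p, q} onto an edge {x, y}, the output on an edge is at most
   max (A x y) (A y x); the ultrametric inequality then propagates this bound
   along any chain.
   Lower bound: if d is the minimal directed chain cost from x to x', the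
   nodes reachable from x by chains of cost < d form a set containing x but not
   x', and every edge leaving it has dissimilarity >= d.  Collapsing this set to
   p and its complement to q is a dissimilarity-reducing map onto a two-node
   network with A(p, q) = d, so (A2) and (A1) give d <= u_X(x, x'). *)
From HB Require Import structures.
From mathcomp Require Import all_boot all_order all_algebra.
From mathcomp Require Import boolp classical_sets reals.
Import Order.TTheory GRing.Theory Num.Theory.
Local Open Scope ring_scope.

Section ChainCost.
Context {R : realType} {T : finType} (B : T -> T -> R).

Lemma chain_cost_nil a : chain_cost B a [::] = 0.
Proof. by rewrite /chain_cost big_nil. Qed.

Lemma chain_cost_cons a y s :
  chain_cost B a (y :: s) = Num.max (B a y) (chain_cost B y s).
Proof. by rewrite /chain_cost big_cons. Qed.

Lemma chain_cost_ge0 a s : 0 <= chain_cost B a s.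
Proof.
elim: s a => [|y s IH] a; first by rewrite chain_cost_nil.
by rewrite chain_cost_cons le_max IH orbT.
Qed.

Lemma chain_cost_rcons_lt a s z d :
  chain_cost B a s < d -> B (last a s) z < d -> chain_cost B a (rcons s z) < d.
Proof.
elim: s a => [|y s IH] a /=.
  by rewrite chain_cost_cons !chain_cost_nil gt_max => -> ->.
by rewrite !chain_cost_cons !gt_max => /andP[-> /IH].
Qed.

Lemma min_chain_cost_le a s : min_chain_cost B a (last a s) <= chain_cost B a s.
Proof.
apply: ge_inf; last by exists s.
by exists 0 => _ [t _ <-]; exact: chain_cost_ge0.
Qed.

Lemma min_chain_cost_ge a b v :
  (forall s, last a s = b -> v <= chain_cost B a s) -> v <= min_chain_cost B a b.
Proof.
move=> vlb; apply: lb_le_inf; first by exists (chain_cost B a [:: b]), [:: b].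
by move=> _ [s sab <-]; apply: vlb.
Qed.

Definition reachable_below (a : T) (d : R) (y : T) : Prop :=
  exists2 s, last a s = y & chain_cost B a s < d.

Lemma reachable_below_step a d y z :
  reachable_below a d y -> B y z < d -> reachable_below a d z.
Proof.
move=> [s <- cs] Byz; exists (rcons s z); first by rewrite last_rcons.
exact: chain_cost_rcons_lt.
Qed.

Lemma reachable_below_min_chain_cost a b :
  ~ reachable_below a (min_chain_cost B a b) b.
Proof. by move=> [s <-]; rewrite ltNge min_chain_cost_le. Qed.

End ChainCost.

Lemma network_gt0 {R : realType} {T : finType} {A : T -> T -> R} {a b : T} :
  is_network A -> a != b -> 0 < A a b.
Proof.
move=> [_ [A0 Aeq]] nab; rewrite lt_neqAle A0 andbT.
by apply: contra_neq nab => /esym/Aeq.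
Qed.

Lemma network_offdiag_lbound {R : realType} {T : finType} {A : T -> T -> R} {d : R} :
  is_network A -> 0 < d ->
  exists2 e, 0 < e <= d & forall a b, a != b -> e <= A a b.
Proof.
move=> netA d_gt0.
exists (\big[Num.min/d]_(p : T * T | p.1 != p.2) A p.1 p.2).
  apply/andP; split.
    apply: (big_ind (fun v => 0 < v)) => // [v w|[a b] /= nab].
      by rewrite lt_min => -> ->.
    exact: network_gt0.
  by apply: (big_rec (fun v => v <= d)) => // i v _ vd; rewrite ge_min vd orbT.
by move=> a b nab; rewrite (bigD1 (a, b)) //= ge_min lexx.
Qed.

Definition net2 {R : realType} (al be : R) (a b : bool) : R :=
  if a == b then 0 else if a then al else be.

Lemma net2_network {R : realType} {al be : R} :
  0 < al -> 0 < be -> is_network (net2 al be).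
Proof.
move=> al_gt0 be_gt0; split; first by rewrite card_bool.
split; first by case; case; rewrite /net2 //= ltW.
by case; case; rewrite /net2 /=; split => // a0; rewrite a0 ltxx in al_gt0 be_gt0.
Qed.

Section Bounds.
Variables (R : realType) (H : method R).
Hypotheses (H_ultra : outputs_ultrametrics H) (H_value : axiom_value H)
  (H_transf : axiom_transformation H).
Variables (T : finType) (A : T -> T -> R).
Hypothesis netA : is_network A.

Lemma method_le_edge x y : H T A x y <= Num.max (A x y) (A y x).
Proof.
have [_ [A0 Aeq]] := netA.
have [_ _ H0 _] := H_ultra T A netA.
have [<-|nxy] := eqVneq x y; first by rewrite (proj2 (H0 x x)) // le_max A0.
have net2xy := net2_network (network_gt0 netA nxy)
  (network_gt0 netA (contra_neq esym nxy)).
rewrite -(H_value _ _ card_bool net2xy true false isT).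
apply: (H_transf _ _ _ _ (fun b : bool => if b then x else y) net2xy netA _ true false).
by case; case; rewrite /net2 //= (proj2 (Aeq _ _)).
Qed.

Lemma method_le_u_R x x' : H T A x x' <= u_R A x x'.
Proof.
have [_ _ H0 H_ultrametric] := H_ultra T A netA.
apply: min_chain_cost_ge => s <-.
elim: s x => [|y s IH] x /=; first by rewrite chain_cost_nil (proj2 (H0 x x)).
rewrite chain_cost_cons; apply: le_trans (H_ultrametric x (last y s) y) _.
by rewrite ge_max; apply/andP; split; rewrite le_max ?method_le_edge ?IH ?orbT.
Qed.

Lemma min_chain_cost_le_method x x' : min_chain_cost A x x' <= H T A x x'.
Proof.
have [_ [A0 _]] := netA.
have [H_ge0 _ _ _] := H_ultra T A netA.
set d := min_chain_cost A x x'.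
have [d_le0|d_gt0] := leP d 0; first exact: le_trans d_le0 (H_ge0 _ _).
have [e /andP[e_gt0 e_le_d] e_le_A] := network_offdiag_lbound netA d_gt0.
pose reach y : bool := `[< reachable_below A x d y >].
have reach_x : reach x by apply/asboolP; exists [::]; rewrite ?chain_cost_nil.
have reach_x' : reach x' = false.
  exact/asboolP/reachable_below_min_chain_cost.
have netde := net2_network d_gt0 e_gt0.
have := H_transf _ _ _ _ reach netA netde _ x x'.
rewrite reach_x reach_x' (H_value _ _ card_bool netde true false isT).
rewrite [net2 _ _ true false]/net2 [net2 _ _ false true]/net2 /=.
rewrite (max_idPl e_le_d); apply=> y z; rewrite /net2.
case reach_y: (reach y); case reach_z: (reach z) => //=.
- (* Leaving the reachable set costs at least [d]. *)
  rewrite leNgt; apply/negP => Ayz.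
  have: reach z.
    by apply/asboolP; apply: reachable_below_step Ayz; apply/asboolP.
  by rewrite reach_z.
- by apply: e_le_A; apply: contraFneq reach_y => ->.
Qed.

End Bounds.

Theorem theorem2 (R : realType) (H : method R) :
  outputs_ultrametrics H -> axiom_value H -> axiom_transformation H ->
  forall (T : finType) (A : T -> T -> R), is_network A ->
  forall x x' : T, u_NR A x x' <= H T A x x' <= u_R A x x'.
Proof.
move=> H_ultra H_value H_transf T A netA x x'.
have [_ H_sym _ _] := H_ultra T A netA.
rewrite method_le_u_R // andbT /u_NR ge_max.
by rewrite !min_chain_cost_le_method // H_sym min_chain_cost_le_method.
Qed.
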